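(* Let $u^2_{2n}$ denote the coefficient of $a^4$ in the Taylor expansion $u_{2n}(a)=u^0_{2n}+u^1_{2n}a^2+u^2_{2n}a^4+O(a^6)$ at $a=0$. Then $$u^2_2=1,\quad u^2_4=\frac{63}{64},\quad u^2_6=\frac{2917}{2592},\quad u^2_8=\frac{335485}{331776},\quad u^2_{10}=\frac{382273}{460800},$$ and for $n=6,7,\dots$, $$u^2_{2n}=\frac{61^2}{12^4}\,\frac{(n+1)^2}{2^{n+1}}\Bigl(n+\frac{2^2\,29^2\,89}{5^2\,61^2}\Bigr).$$
   Context: The rational functions $u_{2n}(a)$ (which depend on $a$ only through $a^2$) are defined by $(a^2+1)u_2=1$ and, for $n\ge2$, $(a^2+n^2)u_{2n}=3u_{2(n-1)}+3\sum_{j_1+j_2=n-1}u_{2j_1}u_{2j_2}+\sum_{j_1+j_2+j_3=n-1}u_{2j_1}u_{2j_2}u_{2j_3}-\sum_{1\le j_1,\,2j_1<n}(n-2j_1)^2u_{2j_1}u_{2(n-j_1)}$, all indices $j_i\ge1$. *)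

From mathcomp Require Import all_boot all_order all_algebra.
From mathcomp Require Import reals.
Set Implicit Arguments. Unset Strict Implicit. Unset Printing Implicit Defensive.
Import Order.TTheory GRing.Theory Num.Theory.
Local Open Scope ring_scope.

Section U.
Variable R : realType.

(* Given s = [:: u_0; u_2; ...; u_{2(n-1)}] (u_0 is a dummy 0, never used,
   all indices j_i >= 1), compute u_{2n}(a) from the defining recursion. *)
Definition ustep (a : R) (s : seq R) (n : nat) : R :=
  let u j := nth 0 s j in
  if n == 1%N then 1 / (a ^+ 2 + 1)
  else
   (3 * u n.-1
    + 3 * (\sum_(1 <= j1 < n.-1) u j1 * u (n.-1 - j1)%N)
    + (\sum_(1 <= j1 < n.-1) \sum_(1 <= j2 < n.-1 - j1)
          u j1 * u j2 * u (n.-1 - j1 - j2)%N)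
    - (\sum_(1 <= j1 < n | (2 * j1 < n)%N)
          ((n - 2 * j1) ^ 2)%:R * u j1 * u (n - j1)%N))
   / (a ^+ 2 + (n ^ 2)%:R).

Fixpoint useq (a : R) (n : nat) : seq R :=
  match n with
  | 0 => [:: 0]
  | m.+1 => rcons (useq a m) (ustep a (useq a m) m.+1)
  end.

(* uu a n = u_{2n}(a), for n >= 1 *)
Definition uu (a : R) (n : nat) : R := nth 0 (useq a n) n.

Definition a4_coef (f : R -> R) (c : R) : Prop :=
  exists c0 c1 C d : R, 0 < d /\
    forall a : R, `|a| < d ->
      `|f a - (c0 + c1 * a ^+ 2 + c * a ^+ 4)| <= C * `|a| ^+ 6.

End U.

From mathcomp Require Import all_boot all_order all_algebra.
From mathcomp Require Import reals.
From mathcomp Require Import ring zify.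
Import Order.TTheory GRing.Theory Num.Theory.
Local Open Scope ring_scope.
Set Implicit Arguments. Unset Strict Implicit. Unset Printing Implicit Defensive.

(* Write u_{2n}(a) = 2^-n (V0 n + V1 n a^2 + V2 n a^4) + O(a^6).  Expanding the
   defining recursion in powers of a^2 (the denominator a^2 + n^2 is harmless near
   a = 0) gives three recursions for V0, V1, V2, in which the quadratic and cubic
   terms become discrete convolutions.  The claimed V0, V1, V2 are polynomials in n
   beyond a few initial values, hence so is every convolution that occurs.  Such a
   closed form is certified by finite differences: m forward differences turn a
   convolution with a sequence of degree < m into a sum with a bounded number of
   terms, so it suffices to compare m-th differences (a polynomial identity) and m
   initial values.  The recursions then become polynomial identities in n, plus
   numerical checks for small n. *)

Section Expansion.
Variable R : realFieldType.
Implicit Types (f g h e : R -> R) (c m : R).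

Definition bounded_near0 h :=
  exists M d : R, 0 < d /\ forall a, `|a| < d -> `|h a| <= M.

Definition bigO6 e :=
  exists C d : R, 0 < d /\ forall a, `|a| < d -> `|e a| <= C * `|a| ^+ 6.

Definition expansion f c0 c1 c2 :=
  bigO6 (fun a => f a - (c0 + c1 * a ^+ 2 + c2 * a ^+ 4)).

Lemma bounded_near0_ext h h' : h =1 h' -> bounded_near0 h -> bounded_near0 h'.
Proof. by move=> eh [M [d [d0 hM]]]; exists M, d; split=> // a /hM; rewrite eh. Qed.

Lemma bigO6_ext e e' : e =1 e' -> bigO6 e -> bigO6 e'.
Proof. by move=> ee [C [d [d0 hC]]]; exists C, d; split=> // a /hC; rewrite ee. Qed.

Lemma bounded_near0_cst c : bounded_near0 (fun => c).
Proof. by exists `|c|, 1. Qed.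

Lemma bounded_near0_add h1 h2 :
  bounded_near0 h1 -> bounded_near0 h2 -> bounded_near0 (fun a => h1 a + h2 a).
Proof.
move=> [M1 [d1 [d10 h1M]]] [M2 [d2 [d20 h2M]]].
exists (M1 + M2), (Num.min d1 d2); split=> [|a]; first by rewrite lt_min d10.
rewrite lt_min => /andP[/h1M a1 /h2M a2].
by rewrite (le_trans (ler_normD _ _)) // lerD.
Qed.

Lemma bounded_near0_mul h1 h2 :
  bounded_near0 h1 -> bounded_near0 h2 -> bounded_near0 (fun a => h1 a * h2 a).
Proof.
move=> [M1 [d1 [d10 h1M]]] [M2 [d2 [d20 h2M]]].
exists (M1 * M2), (Num.min d1 d2); split=> [|a]; first by rewrite lt_min d10.
by rewrite lt_min normrM => /andP[/h1M a1 /h2M a2]; rewrite ler_pM.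
Qed.

Lemma bounded_near0_exp n : bounded_near0 (fun a => a ^+ n).
Proof. by exists 1, 1; split=> // a /ltW a1; rewrite normrX exprn_ile1. Qed.

Lemma bounded_near0_even_poly c0 c1 c2 :
  bounded_near0 (fun a => c0 + c1 * a ^+ 2 + c2 * a ^+ 4).
Proof.
have monomial c n : bounded_near0 (fun a => c * a ^+ n).
  exact: bounded_near0_mul (bounded_near0_cst c) (bounded_near0_exp n).
by apply: bounded_near0_add => //; apply: bounded_near0_add => //; exact: bounded_near0_cst.
Qed.

Lemma bounded_near0_inv_sqrD m : 0 < m -> bounded_near0 (fun a => (a ^+ 2 + m)^-1).
Proof.
move=> m0; exists m^-1, 1; split=> // a _.
have am0 : 0 < a ^+ 2 + m by rewrite ltr_wpDl ?sqr_ge0.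
rewrite ger0_norm; last by rewrite invr_ge0 ltW.
by rewrite lef_pV2 ?posrE // lerDr sqr_ge0.
Qed.

Lemma bigO6_bounded_near0 e : bigO6 e -> bounded_near0 e.
Proof.
move=> [C [d [d0 hC]]]; exists `|C|, (Num.min d 1).
split=> [|a]; first by rewrite lt_min d0 ltr01.
rewrite lt_min => /andP[/hC aC /ltW a1].
rewrite (le_trans aC) // (le_trans (ler_wpM2r _ (ler_norm C))) ?exprn_ge0 //.
by rewrite ler_piMr ?exprn_ile1.
Qed.

Lemma bigO6_add e1 e2 : bigO6 e1 -> bigO6 e2 -> bigO6 (fun a => e1 a + e2 a).
Proof.
move=> [C1 [d1 [d10 h1]]] [C2 [d2 [d20 h2]]].
exists (C1 + C2), (Num.min d1 d2); split=> [|a]; first by rewrite lt_min d10.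
rewrite lt_min mulrDl => /andP[/h1 a1 /h2 a2].
by rewrite (le_trans (ler_normD _ _)) // lerD.
Qed.

Lemma bigO6_mul e h : bigO6 e -> bounded_near0 h -> bigO6 (fun a => e a * h a).
Proof.
move=> [C [d1 [d10 hC]]] [M [d2 [d20 hM]]].
exists (C * M), (Num.min d1 d2); split=> [|a]; first by rewrite lt_min d10.
rewrite lt_min normrM mulrAC => /andP[/hC a1 /hM a2].
by rewrite ler_pM.
Qed.

Lemma bigO6_exp6 h : bounded_near0 h -> bigO6 (fun a => a ^+ 6 * h a).
Proof.
move=> [M [d [d0 hM]]]; exists M, d; split=> // a /hM aM.
by rewrite normrM normrX mulrC ler_wpM2r ?exprn_ge0.
Qed.

Lemma expansion_ext f g c0 c1 c2 : f =1 g -> expansion f c0 c1 c2 -> expansion g c0 c1 c2.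
Proof. by move=> fg; apply: bigO6_ext => a; rewrite fg. Qed.

Lemma expansion_eq f c0 c1 c2 d0 d1 d2 : expansion f c0 c1 c2 ->
  c0 = d0 -> c1 = d1 -> c2 = d2 -> expansion f d0 d1 d2.
Proof. by move=> + <- <- <-. Qed.

Lemma expansion_bounded_near0 f c0 c1 c2 : expansion f c0 c1 c2 -> bounded_near0 f.
Proof.
move=> /bigO6_bounded_near0 /bounded_near0_add /(_ (bounded_near0_even_poly c0 c1 c2)).
by apply: bounded_near0_ext => a; rewrite subrK.
Qed.

Lemma expansion_cst c : expansion (fun => c) c 0 0.
Proof. by exists 0, 1; split=> // a _; rewrite !mul0r !addr0 subrr normr0. Qed.

Lemma expansionD f g c0 c1 c2 d0 d1 d2 :
  expansion f c0 c1 c2 -> expansion g d0 d1 d2 ->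
  expansion (fun a => f a + g a) (c0 + d0) (c1 + d1) (c2 + d2).
Proof. by move=> ef eg; apply: bigO6_ext (bigO6_add ef eg) => a; ring. Qed.

Lemma expansionZ c f c0 c1 c2 : expansion f c0 c1 c2 ->
  expansion (fun a => c * f a) (c * c0) (c * c1) (c * c2).
Proof.
by move=> ef; apply: bigO6_ext (bigO6_mul ef (bounded_near0_cst c)) => a; ring.
Qed.

Lemma expansionB f g c0 c1 c2 d0 d1 d2 :
  expansion f c0 c1 c2 -> expansion g d0 d1 d2 ->
  expansion (fun a => f a - g a) (c0 - d0) (c1 - d1) (c2 - d2).
Proof.
move=> ef /(expansionZ (-1)) eg.
by apply: bigO6_ext (bigO6_add ef eg) => a; ring.
Qed.

Lemma expansionM f g c0 c1 c2 d0 d1 d2 :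
  expansion f c0 c1 c2 -> expansion g d0 d1 d2 ->
  expansion (fun a => f a * g a)
    (c0 * d0) (c0 * d1 + c1 * d0) (c0 * d2 + c1 * d1 + c2 * d0).
Proof.
move=> ef eg.
have fg := bigO6_mul ef (expansion_bounded_near0 eg).
have pg := bigO6_mul eg (bounded_near0_even_poly c0 c1 c2).
have high := bigO6_exp6 (bounded_near0_even_poly (c1 * d2 + c2 * d1) (c2 * d2) 0).
by apply: bigO6_ext (bigO6_add (bigO6_add fg pg) high) => a; ring.
Qed.

(* The equations match the coefficients of [(a^2 + m) * quotient = f]. *)
Lemma expansion_div_sqrD f n0 n1 n2 m c0 c1 c2 :
  expansion f n0 n1 n2 -> 0 < m ->
  m * c0 = n0 -> m * c1 + c0 = n1 -> m * c2 + c1 = n2 ->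
  expansion (fun a => f a / (a ^+ 2 + m)) c0 c1 c2.
Proof.
move=> ef m0 e0 e1 e2; rewrite -e0 -e1 -e2 in ef.
have fi := bigO6_mul ef (bounded_near0_inv_sqrD m0).
have high := bigO6_exp6 (bounded_near0_mul (bounded_near0_cst (- c2))
                                          (bounded_near0_inv_sqrD m0)).
apply: bigO6_ext (bigO6_add fi high) => a.
have am0 : a ^+ 2 + m != 0 by rewrite gt_eqF // ltr_wpDl ?sqr_ge0.
by field.
Qed.

Lemma expansion_sum (F : nat -> R -> R) (c0 c1 c2 : nat -> R) (m n : nat) :
  (forall i, (m <= i < n)%N -> expansion (F i) (c0 i) (c1 i) (c2 i)) ->
  expansion (fun a => \sum_(m <= i < n) F i a)
    (\sum_(m <= i < n) c0 i) (\sum_(m <= i < n) c1 i) (\sum_(m <= i < n) c2 i).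
Proof.
have empty k : (k <= m)%N -> expansion (fun a => \sum_(m <= i < k) F i a) 0 0 0.
  by move=> le_km; apply: expansion_ext (expansion_cst 0) => a; rewrite big_geq.
elim: n => [|n IHn] eF; first by rewrite !big_geq //; exact: empty.
case: (leqP m n) => [le_mn|lt_nm]; last by rewrite !big_geq //; exact: empty.
rewrite !big_nat_recr //; apply: expansion_ext (expansionD (IHn _) (eF n _)).
- by move=> a; rewrite big_nat_recr.
- by move=> i /andP[mi ni]; apply: eF; rewrite mi ltnS ltnW.
- by rewrite le_mn /=.
Qed.

End Expansion.

Lemma expansion_a4_coef (R : realType) (f : R -> R) c0 c1 c2 :
  expansion f c0 c1 c2 -> a4_coef f c2.
Proof. by move=> [C [d [d0 hC]]]; exists c0, c1, C, d. Qed.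

Section Convolution.
Variable R : comPzRingType.
Implicit Types (A B F X Y u v : nat -> R).

Definition conv A B k := \sum_(1 <= j < k) A j * B (k - j)%N.

Definition wconv A B k :=
  \sum_(1 <= j < k) (k%:R - 2 * j%:R) ^+ 2 * (A j * B (k - j)%N).

(* The coefficients of a^2 and a^4 in the convolution of two expansions with
   coefficient sequences (A0, A1, A2) and (B0, B1, B2). *)
Definition conv1 A0 A1 B0 B1 k := conv A0 B1 k + conv A1 B0 k.
Definition conv2 A0 A1 A2 B0 B1 B2 k := conv A0 B2 k + conv A1 B1 k + conv A2 B0 k.
Definition wconv1 A0 A1 B0 B1 k := wconv A0 B1 k + wconv A1 B0 k.
Definition wconv2 A0 A1 A2 B0 B1 B2 k := wconv A0 B2 k + wconv A1 B1 k + wconv A2 B0 k.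

Lemma big_nat1_rev (G : nat -> R) k :
  \sum_(1 <= j < k) G j = \sum_(1 <= j < k) G (k - j)%N.
Proof. by rewrite big_nat_rev; apply: eq_bigr => j _; rewrite add1n subSS. Qed.

Lemma eq_conv A A' B B' k : A =1 A' -> B =1 B' -> conv A B k = conv A' B' k.
Proof. by move=> eA eB; apply: eq_bigr => j _; rewrite eA eB. Qed.

Lemma convC A B k : conv A B k = conv B A k.
Proof.
rewrite /conv big_nat1_rev; apply: eq_big_nat => j /andP[_ jk].
by rewrite subKn ?(ltnW jk) // mulrC.
Qed.

Lemma wconvC A B k : wconv A B k = wconv B A k.
Proof.
rewrite /wconv big_nat1_rev; apply: eq_big_nat => j /andP[_ jk].
by rewrite subKn ?(ltnW jk) // natrB ?(ltnW jk) //; ring.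
Qed.

Lemma conv_convC A B C k : conv A (conv B C) k = conv A (conv C B) k.
Proof. by apply: eq_conv => // j; exact: convC. Qed.

Lemma convDr A X Y k :
  conv A (fun j => X j + Y j) k = conv A X k + conv A Y k.
Proof. by rewrite /conv -big_split; apply: eq_bigr => j _; rewrite mulrDr. Qed.

Lemma conv_geom A B (t : R) k :
  conv (fun j => A j * t ^+ j) (fun j => B j * t ^+ j) k = conv A B k * t ^+ k.
Proof.
rewrite /conv mulr_suml; apply: eq_big_nat => j /andP[_ jk].
by rewrite -[in t ^+ k](subnKC (ltnW jk)) exprD; ring.
Qed.

Lemma wconv_geom A B (t : R) k :
  wconv (fun j => A j * t ^+ j) (fun j => B j * t ^+ j) k = wconv A B k * t ^+ k.
Proof.
rewrite /wconv mulr_suml; apply: eq_big_nat => j /andP[_ jk].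
by rewrite -[in t ^+ k](subnKC (ltnW jk)) exprD; ring.
Qed.

(* [(k - 2j)^2 = ((k - j) - j)^2] splits the weight between the two factors. *)
Lemma wconvE A B k :
  wconv A B k = conv (fun j => j%:R ^+ 2 * A j) B k
              - 2 * conv (fun j => j%:R * A j) (fun j => j%:R * B j) k
              + conv A (fun j => j%:R ^+ 2 * B j) k.
Proof.
rewrite /wconv /conv mulr_sumr -sumrB -big_split /=.
by apply: eq_big_nat => j /andP[_ jk]; rewrite natrB ?(ltnW jk) //; ring.
Qed.

Lemma wconv_half u n :
  2 * \sum_(1 <= j < n | (2 * j < n)%N) ((n - 2 * j) ^ 2)%:R * u j * u (n - j)%N
  = wconv u u n.
Proof.
pose G j := (n%:R - 2 * j%:R) ^+ 2 * (u j * u (n - j)%N).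
have G_sym i : (i <= n)%N -> G (n - i)%N = G i.
  by move=> le_in; rewrite /G subKn // natrB //; ring.
rewrite mulr_natl mulr2n (eq_bigr G); last first.
  by move=> j lt_2j; rewrite /G natrX natrB ?natrM ?(ltnW lt_2j) //; ring.
rewrite [RHS](bigID (fun j => (2 * j < n)%N)) /=; congr (_ + _).
rewrite big_mkcond [RHS]big_mkcond big_nat1_rev.
apply: eq_big_nat => i /andP[_ lt_in]; rewrite G_sym ?(ltnW lt_in) //.
case: (eqVneq (2 * i)%N n) => [eq_2i|ne_2i].
  by rewrite /G -eq_2i natrM subrr expr0n mul0r !if_same.
by rewrite -leqNgt; congr (if _ then _ else _); apply/idP/idP => ?; lia.
Qed.

(* Sequences fed to [conv] are indexed from 1: [bdiff] takes the absent term
   [A 0] to be 0. *)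
Definition bdiff A j := A j - (if j is i.+2 then A i.+1 else 0).

Fixpoint fdiff m u : nat -> R :=
  if m is m'.+1 then fdiff m' (fun k => u k.+1 - u k) else u.

Fixpoint fdiffR m (f : R -> R) : R -> R :=
  if m is m'.+1 then fdiffR m' (fun x => f (x + 1) - f x) else f.

Lemma eq_fdiff m u v k : u =1 v -> fdiff m u k = fdiff m v k.
Proof.
by elim: m u v k => [|m IHm] u v k uv //=; apply: IHm => i; rewrite !uv.
Qed.

Lemma fdiffD m u v k : fdiff m (fun i => u i + v i) k = fdiff m u k + fdiff m v k.
Proof.
elim: m u v k => [|m IHm] u v k //=; rewrite -IHm.
by apply: eq_fdiff => i; ring.
Qed.

Lemma fdiffB m u v k : fdiff m (fun i => u i - v i) k = fdiff m u k - fdiff m v k.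
Proof.
elim: m u v k => [|m IHm] u v k //=; rewrite -IHm.
by apply: eq_fdiff => i; ring.
Qed.

Lemma fdiffZ m (c : R) u k : fdiff m (fun i => c * u i) k = c * fdiff m u k.
Proof.
elim: m u k => [|m IHm] u k //=; rewrite -IHm.
by apply: eq_fdiff => i; ring.
Qed.

Lemma fdiff_shift m u k : fdiff m (fun i => u i.+1) k = fdiff m u k.+1.
Proof. by elim: m u k => [|m IHm] u k //; exact: (IHm (fun i => u i.+1 - u i)). Qed.

Lemma fdiff_natr m f k : fdiff m (fun i => f i%:R) k = fdiffR m f k%:R.
Proof.
elim: m f k => [|m IHm] f k //=; rewrite -IHm.
by apply: eq_fdiff => i; rewrite -natr1.
Qed.

Lemma fdiffRS m f x : fdiffR m.+1 f x = fdiffR m f (x + 1) - fdiffR m f x.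
Proof.
by elim: m f x => [|m IHm] f x //; exact: (IHm (fun y => f (y + 1) - f y)).
Qed.

Lemma fdiff_eq0 D m K : (forall k, (K <= k)%N -> fdiff m D k = 0) ->
  (forall i, (i < m)%N -> D (K + i)%N = 0) -> forall k, (K <= k)%N -> D k = 0.
Proof.
elim: m D => [|m IHm] D Dm D0 k Kk; first exact: Dm.
have D_step : forall k, (K <= k)%N -> D k.+1 - D k = 0.
  apply: (IHm (fun i => D i.+1 - D i) Dm) => i im.
  by rewrite -addnS !D0 ?subrr //; lia.
rewrite -(subnKC Kk); elim: (k - K)%N => [|n IHn]; first by rewrite D0.
rewrite addnS -[D _](subrK (D (K + n)%N)) D_step ?leq_addr //.
by rewrite IHn addr0.
Qed.

Lemma conv_bdiff A X k : conv A X k.+1 - conv A X k = conv (bdiff A) X k.+1.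
Proof.
rewrite [in RHS]/conv; under eq_bigr do rewrite mulrBl; rewrite sumrB.
congr (_ - _); case: k => [|k]; first by rewrite /conv !big_geq.
rewrite big_nat_recl // mul0r add0r /conv.
by apply: eq_big_nat => -[|j] // _; rewrite subSS.
Qed.

Lemma fdiff_conv A X m k : fdiff m (conv A X) k = conv (iter m bdiff A) X (k + m).
Proof.
elim: m A k => [|m IHm] A k; first by rewrite addn0.
rewrite /= (@eq_fdiff m _ (fun i => conv (bdiff A) X i.+1)); last exact: conv_bdiff.
by rewrite fdiff_shift IHm -iterS iterSr addSnnS.
Qed.

Lemma conv_finsupp F X s k : (forall j, (s < j)%N -> F j = 0) -> (s < k)%N ->
  conv F X k = \sum_(1 <= j < s.+1) F j * X (k - j)%N.
Proof.
move=> F0 sk; rewrite /conv (big_cat_nat (n := s.+1)) //= [X in _ + X]big1_seq ?addr0 //.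
by move=> j /andP[_]; rewrite mem_index_iota => /andP[sj _]; rewrite F0 ?mul0r.
Qed.

Definition tail_eq (n0 : nat) A (p : R -> R) := forall j, (n0 < j)%N -> A j = p j%:R.

Lemma tail_eqM n0 A p (w : R -> R) :
  tail_eq n0 A p -> tail_eq n0 (fun j => w j%:R * A j) (fun x => w x * p x).
Proof. by move=> Ap j lt_j; rewrite Ap. Qed.

Lemma bdiff_tail A p n0 m j : tail_eq n0 A p -> (n0 + m < j)%N ->
  iter m bdiff A j = fdiffR m p (j - m)%N%:R.
Proof.
move=> Ap; elim: m j => [|m IHm] j lt_j; first by rewrite /= subn0 Ap // -(addn0 n0).
case: j lt_j => [|[|j]] // lt_j; rewrite iterS /bdiff !IHm ?fdiffRS; try lia.
by rewrite subSS subSn ?natr1 //; lia.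
Qed.

Lemma fdiff_conv_tail A X p q m nA nX k :
  tail_eq nA A p -> tail_eq nX X q -> (forall x, fdiffR m p x = 0) ->
  (nA + nX < k)%N ->
  fdiff m (conv A X) k =
    \sum_(1 <= j < (nA + m).+1) iter m bdiff A j * q (k%:R + m%:R - j%:R).
Proof.
move=> Ap Xq p0 lt_k; rewrite fdiff_conv (@conv_finsupp _ _ (nA + m)%N); last first.
- by lia.
- by move=> j lt_j; rewrite (bdiff_tail Ap lt_j) p0.
apply: eq_big_nat => j /andP[_ le_j]; rewrite Xq; last by lia.
by rewrite natrB ?natrD //; lia.
Qed.

Lemma closed_form_of_fdiff T r m n0 :
  (forall k, (n0 < k)%N -> fdiff m T k = fdiffR m r k%:R) ->
  (forall i, (i < m)%N -> T (n0 + i).+1 = r (n0 + i).+1%:R) ->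
  tail_eq n0 T r.
Proof.
move=> Tr T0 k lt_k; apply/eqP; rewrite -subr_eq0; apply/eqP.
apply: (@fdiff_eq0 (fun k => T k - r k%:R) m n0.+1) lt_k.
  by move=> i lt_i; rewrite fdiffB Tr // fdiff_natr subrr.
by move=> i im; rewrite addSn T0 ?subrr.
Qed.

Lemma closed_form_conv A X p q r m nA nX :
  tail_eq nA A p -> tail_eq nX X q -> (forall x, fdiffR m p x = 0) ->
  (forall x, fdiffR m r x =
     \sum_(1 <= j < (nA + m).+1) iter m bdiff A j * q (x + m%:R - j%:R)) ->
  (forall i, (i < m)%N -> conv A X (nA + nX + i).+1 = r (nA + nX + i).+1%:R) ->
  tail_eq (nA + nX) (conv A X) r.
Proof.
move=> Ap Xq p0 rE; apply: closed_form_of_fdiff => k lt_k.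
by rewrite (fdiff_conv_tail Ap Xq p0 lt_k) rE.
Qed.

Lemma closed_form_wconv A B p q r m nA nB :
  tail_eq nA A p -> tail_eq nB B q ->
  (forall x, fdiffR m p x = 0) -> (forall x, fdiffR m (fun y => y * p y) x = 0) ->
  (forall x, fdiffR m (fun y => y ^+ 2 * p y) x = 0) ->
  (forall x, fdiffR m r x =
     \sum_(1 <= j < (nA + m).+1)
        iter m bdiff (fun j => j%:R ^+ 2 * A j) j * q (x + m%:R - j%:R)
     - 2 * \sum_(1 <= j < (nA + m).+1)
        iter m bdiff (fun j => j%:R * A j) j
        * ((x + m%:R - j%:R) * q (x + m%:R - j%:R))
     + \sum_(1 <= j < (nA + m).+1)
        iter m bdiff A j * ((x + m%:R - j%:R) ^+ 2 * q (x + m%:R - j%:R))) ->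
  (forall i, (i < m)%N -> wconv A B (nA + nB + i).+1 = r (nA + nB + i).+1%:R) ->
  tail_eq (nA + nB) (wconv A B) r.
Proof.
move=> Ap Bq p0 p1 p2 rE; apply: closed_form_of_fdiff => k lt_k.
rewrite (eq_fdiff _ _ (wconvE A B)) fdiffD fdiffB fdiffZ rE.
rewrite (fdiff_conv_tail (tail_eqM (fun x => x ^+ 2) Ap) Bq p2 lt_k).
rewrite (fdiff_conv_tail (tail_eqM id Ap) (tail_eqM id Bq) p1 lt_k).
by rewrite (fdiff_conv_tail Ap (tail_eqM (fun x => x ^+ 2) Bq) p0 lt_k).
Qed.

End Convolution.

Section Coefficients.
Variable R : numFieldType.

(* [Vi n] is 2^n times the coefficient of a^(2i) in u_{2n}(a): a few initial
   values, then a polynomial in n. *)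
Definition tail0 (x : R) : R := x + 1.
Definition tail1 (x : R) : R := - 61 / 12 ^+ 2 * (x + 1) ^+ 2.
Definition tail2 (x : R) : R :=
  61 ^+ 2 / (2 * 12 ^+ 4) * (x + 1) ^+ 2
  * (x + 2 ^+ 2 * 29 ^+ 2 * 89 / (5 ^+ 2 * 61 ^+ 2)).

Definition V0 (j : nat) : R := tail0 j%:R.
Definition V1 (j : nat) : R :=
  match j with 1 => - 2 | 2 => - 15 / 4 | _ => tail1 j%:R end.
Definition V2 (j : nat) : R :=
  match j with
  | 1 => 2 | 2 => 63 / 16 | 3 => 2917 / 324
  | 4 => 5 * 229 * 293 / (2 ^+ 8 * 3 ^+ 4)
  | 5 => 251 * 1523 / (2 ^+ 6 * 3 ^+ 2 * 5 ^+ 2)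
  | _ => tail2 j%:R
  end.

Lemma tail_V0 : tail_eq 0 V0 tail0. Proof. by []. Qed.
Lemma tail_V1 : tail_eq 2 V1 tail1. Proof. by case=> [|[|[|j]]]. Qed.
Lemma tail_V2 : tail_eq 5 V2 tail2. Proof. by case=> [|[|[|[|[|[|j]]]]]]. Qed.

(* Closed forms of the convolutions of V0, V1, V2, found by interpolating computed
   values and certified by the lemmas [conv00], ..., [wconv11] below. *)
Definition r00 (x : R) : R := (x - 1) * (x + 1) * (x + 6) / 6.
Definition r01 (x : R) : R :=
  (624 + 68 * x - 671 * x ^+ 2 - 488 * x ^+ 3 - 61 * x ^+ 4) / 1728.
Definition r02 (x : R) : R :=
  (- 1615920%:R + 676934%:R * x + 2828231%:R * x ^+ 2 + 2674243%:R * x ^+ 3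
   + 764521%:R * x ^+ 4 + 55815%:R * x ^+ 5) / (2 ^+ 11 * 3 ^+ 5 * 5 ^+ 2).
Definition r11 (x : R) : R :=
  (- 144570%:R - 86681%:R * x + 202520%:R * x ^+ 2 + 148840%:R * x ^+ 3
   + 37210%:R * x ^+ 4 + 3721 * x ^+ 5) / (2 ^+ 9 * 3 ^+ 5 * 5).
Definition r000 (x : R) : R :=
  (x - 1) * (x + 1) * (x - 2) * (x + 5) * (x + 12) / 120.
Definition r001 (x : R) : R :=
  (- 15480%:R + 16818%:R * x + 18371%:R * x ^+ 2 + 1560 * x ^+ 3 - 4270 * x ^+ 4
   - 1098 * x ^+ 5 - 61 * x ^+ 6) / (2 ^+ 7 * 3 ^+ 4 * 5).
Definition r002 (x : R) : R :=
  (- 51725520%:R - 754902336%:R * x - 297603362%:R * x ^+ 2 - 51432675%:R * x ^+ 3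
   + 101121790%:R * x ^+ 4 + 53352096%:R * x ^+ 5 + 7305172%:R * x ^+ 6
   + 279075%:R * x ^+ 7) / (2 ^+ 12 * 3 ^+ 6 * 5 ^+ 3 * 7).
Definition r011 (x : R) : R :=
  (7877520%:R - 5750802%:R * x - 16380147%:R * x ^+ 2 - 1768207%:R * x ^+ 3
   + 2850225%:R * x ^+ 4 + 1067927%:R * x ^+ 5 + 156282%:R * x ^+ 6
   + 7442 * x ^+ 7) / (2 ^+ 11 * 3 ^+ 6 * 5 * 7).
Definition w00 (x : R) : R := x * (x - 1) * (x + 1) * (x - 2) * (x + 12) / 30.
Definition w01 (x : R) : R :=
  (- 8640 - 528 * x + 5456 * x ^+ 2 + 1560 * x ^+ 3 + 305 * x ^+ 4 - 732 * x ^+ 5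
   - 61 * x ^+ 6) / 8640.
Definition w02 (x : R) : R :=
  (450414720%:R - 513986784%:R * x - 112231392%:R * x ^+ 2 + 13033650%:R * x ^+ 3
   - 26758235%:R * x ^+ 4 + 14079289%:R * x ^+ 5 + 7956347%:R * x ^+ 6
   + 465125%:R * x ^+ 7) / (2 ^+ 11 * 3 ^+ 5 * 5 ^+ 3 * 7).
Definition w11 (x : R) : R :=
  (- 3689280%:R + 10026936%:R * x - 2631174%:R * x ^+ 2 - 3323341%:R * x ^+ 3
   + 375760%:R * x ^+ 4 + 312564%:R * x ^+ 5 + 52094%:R * x ^+ 6
   + 3721 * x ^+ 7) / (2 ^+ 9 * 3 ^+ 5 * 5 * 7).

Ltac evaluate :=
  unfold conv1, conv2, wconv1, wconv2, conv, wconv;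
  rewrite ?unlock ?addnE ?subnE /=; unfold bdiff, V0, V1, V2; rewrite /=;
  unfold tail0, tail1, tail2, r00, r01, r02, r11, r000, r001, r002, r011,
    w00, w01, w02, w11;
  by field.

Lemma conv00 : tail_eq 0 (conv V0 V0) r00.
Proof.
by apply: (closed_form_conv (m := 2) tail_V0 tail_V0) => [x|x|[|[|]] //= _]; evaluate.
Qed.

Lemma conv01 : tail_eq 2 (conv V0 V1) r01.
Proof.
by apply: (closed_form_conv (m := 2) tail_V0 tail_V1) => [x|x|[|[|]] //= _]; evaluate.
Qed.

Lemma conv02 : tail_eq 5 (conv V0 V2) r02.
Proof.
by apply: (closed_form_conv (m := 2) tail_V0 tail_V2) => [x|x|[|[|]] //= _]; evaluate.
Qed.

Lemma conv11 : tail_eq 4 (conv V1 V1) r11.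
Proof.
by apply: (closed_form_conv (m := 3) tail_V1 tail_V1) => [x|x|[|[|[|]]] //= _]; evaluate.
Qed.

Lemma conv000 : tail_eq 0 (conv V0 (conv V0 V0)) r000.
Proof.
by apply: (closed_form_conv (m := 2) tail_V0 conv00) => [x|x|[|[|]] //= _]; evaluate.
Qed.

Lemma conv001 : tail_eq 2 (conv V0 (conv V0 V1)) r001.
Proof.
by apply: (closed_form_conv (m := 2) tail_V0 conv01) => [x|x|[|[|]] //= _]; evaluate.
Qed.

Lemma conv002 : tail_eq 5 (conv V0 (conv V0 V2)) r002.
Proof.
by apply: (closed_form_conv (m := 2) tail_V0 conv02) => [x|x|[|[|]] //= _]; evaluate.
Qed.

Lemma conv011 : tail_eq 4 (conv V0 (conv V1 V1)) r011.
Proof.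
by apply: (closed_form_conv (m := 2) tail_V0 conv11) => [x|x|[|[|]] //= _]; evaluate.
Qed.

Lemma conv100 : tail_eq 2 (conv V1 (conv V0 V0)) r001.
Proof.
by apply: (closed_form_conv (m := 3) tail_V1 conv00) => [x|x|[|[|[|]]] //= _]; evaluate.
Qed.

Lemma conv101 : tail_eq 4 (conv V1 (conv V0 V1)) r011.
Proof.
by apply: (closed_form_conv (m := 3) tail_V1 conv01) => [x|x|[|[|[|]]] //= _]; evaluate.
Qed.

Lemma conv200 : tail_eq 5 (conv V2 (conv V0 V0)) r002.
Proof.
by apply: (closed_form_conv (m := 4) tail_V2 conv00) => [x|x|[|[|[|[|]]]] //= _]; evaluate.
Qed.

Lemma wconv00 : tail_eq 0 (wconv V0 V0) w00.
Proof.
by apply: (closed_form_wconv (m := 4) tail_V0 tail_V0) => [x|x|x|x|[|[|[|[|]]]] //= _]; evaluate.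
Qed.

Lemma wconv01 : tail_eq 2 (wconv V0 V1) w01.
Proof.
by apply: (closed_form_wconv (m := 4) tail_V0 tail_V1) => [x|x|x|x|[|[|[|[|]]]] //= _]; evaluate.
Qed.

Lemma wconv02 : tail_eq 5 (wconv V0 V2) w02.
Proof.
by apply: (closed_form_wconv (m := 4) tail_V0 tail_V2) => [x|x|x|x|[|[|[|[|]]]] //= _]; evaluate.
Qed.

Lemma wconv11 : tail_eq 4 (wconv V1 V1) w11.
Proof.
by apply: (closed_form_wconv (m := 5) tail_V1 tail_V1) => [x|x|x|x|[|[|[|[|[|]]]]] //= _]; evaluate.
Qed.

Lemma V_rec0 k : (0 < k)%N ->
  k.+1%:R ^+ 2 * V0 k.+1
  = 6 * V0 k + 6 * conv V0 V0 k + 2 * conv V0 (conv V0 V0) k - wconv V0 V0 k.+1 / 2.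
Proof.
move=> k0; rewrite conv00 // conv000 // wconv00 //.
by rewrite -[k.+1%:R]natr1; evaluate.
Qed.

Lemma V_rec1 k : (0 < k)%N ->
  k.+1%:R ^+ 2 * V1 k.+1 + V0 k.+1
  = 6 * V1 k + 6 * conv1 V0 V1 V0 V1 k
    + 2 * conv1 V0 V1 (conv V0 V0) (conv1 V0 V1 V0 V1) k
    - wconv1 V0 V1 V0 V1 k.+1 / 2.
Proof.
case: (ltnP 2 k) => [k2 _|]; last first.
  by case: k => [|[|[|]]] //= _ _; evaluate.
rewrite /conv1 /wconv1 (convDr V0 (conv V0 V1) (conv V1 V0)) (conv_convC V0 V1 V0).
rewrite (convC V1 V0) (wconvC V1 V0).
rewrite conv01 ?conv001 ?conv100 ?wconv01 ?tail_V1; try lia.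
by rewrite -[k.+1%:R]natr1; evaluate.
Qed.

Lemma V_rec2 k : (0 < k)%N ->
  k.+1%:R ^+ 2 * V2 k.+1 + V1 k.+1
  = 6 * V2 k + 6 * conv2 V0 V1 V2 V0 V1 V2 k
    + 2 * conv2 V0 V1 V2 (conv V0 V0) (conv1 V0 V1 V0 V1) (conv2 V0 V1 V2 V0 V1 V2) k
    - wconv2 V0 V1 V2 V0 V1 V2 k.+1 / 2.
Proof.
case: (ltnP 5 k) => [k5 _|]; last first.
  by case: k => [|[|[|[|[|[|]]]]]] //= _ _; evaluate.
rewrite /conv1 /conv2 /wconv2 (convDr V1 (conv V0 V1) (conv V1 V0)).
rewrite (convDr V0 (fun j => conv V0 V2 j + conv V1 V1 j) (conv V2 V0)).
rewrite (convDr V0 (conv V0 V2) (conv V1 V1)) (conv_convC V0 V2 V0).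
rewrite (conv_convC V1 V1 V0) (convC V2 V0) (wconvC V2 V0).
rewrite conv02 ?conv11 ?conv002 ?conv011 ?conv101 ?conv200 ?wconv02 ?wconv11;
  rewrite ?tail_V2 ?tail_V1; try lia.
by rewrite -[k.+1%:R]natr1; evaluate.
Qed.

End Coefficients.

Arguments V0 {R} j.
Arguments V1 {R} j.
Arguments V2 {R} j.

Section Scaling.
Variable R : numFieldType.
Implicit Types A B C D E W : nat -> R.

Definition scaled A j : R := A j / 2 ^+ j.

Lemma scaled_geom A j : scaled A j = A j * 2^-1 ^+ j.
Proof. by rewrite /scaled exprVn. Qed.

Lemma conv_scaled A B k : conv (scaled A) (scaled B) k = scaled (conv A B) k.
Proof. rewrite scaled_geom -conv_geom; apply: eq_conv => j; exact: scaled_geom. Qed.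

Lemma wconv_scaled A B k : wconv (scaled A) (scaled B) k = scaled (wconv A B) k.
Proof.
rewrite scaled_geom -wconv_geom /wconv.
by apply: eq_bigr => j _; rewrite !scaled_geom.
Qed.

Lemma scaledD A B k : scaled (fun j => A j + B j) k = scaled A k + scaled B k.
Proof. exact: mulrDl. Qed.

Lemma scaled_rec (m : R) A B C D E W k :
  m * A k.+1 + B k.+1 = 6 * C k + 6 * D k + 2 * E k - W k.+1 / 2 ->
  m * scaled A k.+1 + scaled B k.+1
  = 3 * scaled C k + 3 * scaled D k + scaled E k - 2^-1 * scaled W k.+1.
Proof.
have t0 : (2 : R) ^+ k != 0 by rewrite expf_neq0 ?pnatr_eq0.
move=> rec; rewrite /scaled exprS mulrA -mulrDl rec.
by field.
Qed.

Lemma scaled_rec0 (m : R) A C D E W k :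
  m * A k.+1 = 6 * C k + 6 * D k + 2 * E k - W k.+1 / 2 ->
  m * scaled A k.+1 = 3 * scaled C k + 3 * scaled D k + scaled E k - 2^-1 * scaled W k.+1.
Proof.
move=> rec; rewrite -[LHS]addr0 -[0](mul0r (2 ^- k.+1)).
by apply: (scaled_rec (B := fun=> 0)); rewrite addr0.
Qed.

End Scaling.

Section ExpansionOfConvolutions.
Variable R : realFieldType.
Implicit Types (A B : nat -> R) (u v : nat -> R -> R).

Lemma expansion_conv u v A0 A1 A2 B0 B1 B2 k :
  (forall j, (0 < j < k)%N -> expansion (u j) (scaled A0 j) (scaled A1 j) (scaled A2 j)) ->
  (forall j, (0 < j < k)%N -> expansion (v j) (scaled B0 j) (scaled B1 j) (scaled B2 j)) ->
  expansion (fun a => conv (u^~ a) (v^~ a) k)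
    (scaled (conv A0 B0) k) (scaled (conv1 A0 A1 B0 B1) k)
    (scaled (conv2 A0 A1 A2 B0 B1 B2) k).
Proof.
move=> eu ev.
apply: expansion_eq (expansion_sum (F := fun j a => u j a * v (k - j)%N a) _) _ _ _.
- by move=> j /andP[j1 jk]; apply: expansionM; [apply: eu | apply: ev]; lia.
- by rewrite -conv_scaled.
- by rewrite /conv1 scaledD -!conv_scaled -big_split.
- by rewrite /conv2 !scaledD -!conv_scaled -!big_split.
Qed.

Lemma expansion_wconv u v A0 A1 A2 B0 B1 B2 k :
  (forall j, (0 < j < k)%N -> expansion (u j) (scaled A0 j) (scaled A1 j) (scaled A2 j)) ->
  (forall j, (0 < j < k)%N -> expansion (v j) (scaled B0 j) (scaled B1 j) (scaled B2 j)) ->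
  expansion (fun a => wconv (u^~ a) (v^~ a) k)
    (scaled (wconv A0 B0) k) (scaled (wconv1 A0 A1 B0 B1) k)
    (scaled (wconv2 A0 A1 A2 B0 B1 B2) k).
Proof.
move=> eu ev; apply: expansion_eq
  (expansion_sum (F := fun j a => (k%:R - 2 * j%:R) ^+ 2 * (u j a * v (k - j)%N a)) _)
  _ _ _.
- move=> j /andP[j1 jk]; apply: expansionZ.
  by apply: expansionM; [apply: eu | apply: ev]; lia.
- by rewrite -wconv_scaled.
- by rewrite /wconv1 scaledD -!wconv_scaled -big_split; apply: eq_bigr => j _; rewrite mulrDr.
- rewrite /wconv2 !scaledD -!wconv_scaled -!big_split.
  by apply: eq_bigr => j _; rewrite !mulrDr.
Qed.

End ExpansionOfConvolutions.

Section ExpansionOfU.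
Variable R : realType.
Implicit Types (a : R) (n : nat).

Lemma size_useq a n : size (useq a n) = n.+1.
Proof. by elim: n => //= n IH; rewrite size_rcons IH. Qed.

Lemma nth_useq a n j : (j <= n)%N -> nth 0 (useq a n) j = uu a j.
Proof.
rewrite /uu; elim: n => [|n IH]; first by rewrite leqn0 => /eqP ->.
rewrite leq_eqVlt => /orP[/eqP -> // | lt_jn].
by rewrite /= nth_rcons size_useq lt_jn IH.
Qed.

Lemma uu_ustep a n : uu a n.+1 = ustep a (useq a n) n.+1.
Proof. by rewrite /uu /= nth_rcons size_useq ltnn eqxx. Qed.

Lemma uu1 a : uu a 1 = 1 / (a ^+ 2 + 1).
Proof. by rewrite uu_ustep. Qed.

Lemma uu_conv a n :
  uu a n.+2 = (3 * uu a n.+1 + 3 * conv (uu a) (uu a) n.+1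
               + conv (uu a) (conv (uu a) (uu a)) n.+1
               - 2^-1 * wconv (uu a) (uu a) n.+2) / (a ^+ 2 + (n.+2 ^ 2)%:R).
Proof.
rewrite uu_ustep; set s := useq a n.+1.
have u j : (j <= n.+1)%N -> nth 0 s j = uu a j by exact: nth_useq.
rewrite /ustep /= -wconv_half mulrA mulVf ?pnatr_eq0 // mul1r.
congr ((_ + _ + _ - _) / _).
- congr (_ * _); apply: eq_big_nat => j /andP[j1 jn].
  by rewrite !u //; lia.
- rewrite /conv; apply: eq_big_nat => j /andP[j1 jn]; rewrite mulr_sumr.
  by apply: eq_big_nat => i /andP[i1 ij]; rewrite !u ?mulrA //; lia.
- rewrite big_mkcond [RHS]big_mkcond; apply: eq_big_nat => j /andP[j1 jn].
  by rewrite !u //; lia.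
Qed.

Lemma uu_expansion n : (0 < n)%N ->
  expansion (fun a => uu a n) (scaled V0 n) (scaled V1 n) (scaled V2 n).
Proof.
elim/ltn_ind: n => -[|[|k]] IH // _.
  apply: expansion_ext (expansion_div_sqrD (expansion_cst 1) ltr01 _ _ _) => [a|||];
    rewrite ?uu1 // /scaled /V0 /V1 /V2 /tail0 /=; by field.
have exp_u j : (0 < j < k.+2)%N ->
    expansion (fun a => uu a j) (scaled V0 j) (scaled V1 j) (scaled V2 j).
  by move=> /andP[j0 jk]; apply: IH.
have exp_u' j : (0 < j < k.+1)%N ->
    expansion (fun a => uu a j) (scaled V0 j) (scaled V1 j) (scaled V2 j).
  by move=> jk; apply: exp_u; lia.
have exp_sq j : (0 < j < k.+1)%N -> expansion (fun a => conv (uu a) (uu a) j)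
    (scaled (conv V0 V0) j) (scaled (conv1 V0 V1 V0 V1) j)
    (scaled (conv2 V0 V1 V2 V0 V1 V2) j).
  by move=> jk; apply: expansion_conv => i ij; apply: exp_u; lia.
have exp_num := expansionB
  (expansionD (expansionD (expansionZ 3 (exp_u k.+1 _))
                          (expansionZ 3 (expansion_conv exp_u' exp_u')))
              (expansion_conv exp_u' exp_sq))
  (expansionZ 2^-1 (expansion_wconv exp_u exp_u)).
apply: expansion_ext (expansion_div_sqrD (exp_num _) _ _ _ _) => [a|||||].
- by rewrite uu_conv.
- by lia.
- by rewrite ltr0n expn_gt0.
- by rewrite natrX; apply: scaled_rec0; apply: V_rec0.
- by rewrite natrX; apply: scaled_rec; apply: V_rec1.
- by rewrite natrX; apply: scaled_rec; apply: V_rec2.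
Qed.

End ExpansionOfU.

Theorem proposition12 (R : realType) :
  [/\ a4_coef (fun a : R => uu a 1) 1,
      a4_coef (fun a : R => uu a 2) (63 / 64),
      a4_coef (fun a : R => uu a 3) (2917 / 2592),
      a4_coef (fun a : R => uu a 4) ((5 * 229 * 293) / (2 ^+ 12 * 3 ^+ 4)) &
      a4_coef (fun a : R => uu a 5) ((251 * 1523) / (2 ^+ 11 * 3 ^+ 2 * 5 ^+ 2))]
  /\ forall n : nat, (6 <= n)%N ->
      a4_coef (fun a : R => uu a n)
        ((61 ^+ 2 / 12 ^+ 4) * ((n.+1)%:R ^+ 2 / 2 ^+ n.+1)
         * (n%:R + (2 ^+ 2 * 29 ^+ 2 * 89) / (5 ^+ 2 * 61 ^+ 2))).
Proof.
have coef_a4 n c :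
    (0 < n)%N -> scaled (V2 : nat -> R) n = c -> a4_coef (fun a : R => uu a n) c.
  by move=> n0 <-; exact: expansion_a4_coef (uu_expansion R n0).
split; first by split; apply: coef_a4 => //; rewrite /scaled /=; field.
move=> n n6; apply: coef_a4; first lia.
have t0 : (2 : R) ^+ n != 0 by rewrite expf_neq0 ?pnatr_eq0.
rewrite /scaled tail_V2 // /tail2 -[n.+1%:R]natr1 [2 ^+ n.+1]exprS.
by field.
Qed.
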